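(* The maximal eigenvalue radius function $\rho$ associated to an admissible weight $\varphi:\mathbb{C}^n\to\mathbb{R}$ is bounded.
   Context: A $C^2$ function $\varphi:\mathbb{C}^n\to\mathbb{R}$ is plurisubharmonic if its complex Hessian $(\partial^2\varphi/\partial z_j\partial\bar z_k)$ is positive semidefinite everywhere. It is admissible if it is $C^2$, plurisubharmonic, and (a) there is $D<\infty$ with $\sup_{B(z,2r)}\Delta\varphi\le D\sup_{B(z,r)}\Delta\varphi$ for all $z\in\mathbb{C}^n$, $r>0$ ($\Delta$ the Euclidean Laplacian on $\mathbb{C}^n\cong\mathbb{R}^{2n}$, $B$ Euclidean balls), and (b) there is $c>0$ with $\inf_{z\in\mathbb{C}^n}\sup_{w\in B(z,c)}\Delta\varphi(w)>0$. Its maximal eigenvalue radius function is $\rho(z)=\sup\{r>0:\sup_{w\in B(z,r)}\Delta\varphi(w)\le r^{-2}\}$. *)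

From HB Require Import structures.
From mathcomp Require Import all_boot all_order all_algebra.
From mathcomp Require Import all_classical all_reals all_analysis.
From mathcomp Require Import complex.
Set Implicit Arguments. Unset Strict Implicit. Unset Printing Implicit Defensive.
Import Order.TTheory GRing.Theory Num.Theory.
Import numFieldNormedType.Exports.
Local Open Scope classical_set_scope.
Local Open Scope ring_scope.

(* C^n is identified with R^(2n) = 'rV[R]_(n + n): the point
   z = (x_1 + i y_1, ..., x_n + i y_n) has real coordinates
   x_j = z (lshift n j) and y_j = z (rshift n j). *)
Definition Cn (R : realType) (n : nat) := 'rV[R]_(n + n).

Definition ecoord (R : realType) (m : nat) (k : 'I_m) : 'rV[R]_m := delta_mx 0 k.

Definition pd (R : realType) (m : nat) (k : 'I_m) (f : 'rV[R]_m -> R) : 'rV[R]_m -> R :=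
  fun z => 'D_(ecoord R k) f z.

Definition C2 (R : realType) (m : nat) (f : 'rV[R]_m -> R) : Prop :=
  continuous f /\
  (forall k z, derivable f z (ecoord R k)) /\
  (forall k, continuous (pd k f)) /\
  (forall k l z, derivable (pd k f) z (ecoord R l)) /\
  (forall k l, continuous (pd l (pd k f))).

(* complex Hessian  d^2 phi / dz_j d(bar z_k)
   = 1/4 [ (phi_{x_j x_k} + phi_{y_j y_k}) + i (phi_{x_j y_k} - phi_{y_j x_k}) ] *)
Definition complex_hessian (R : realType) (n : nat) (phi : Cn R n -> R) (z : Cn R n)
  : 'M[R[i]]_n :=
  \matrix_(j, k)
    (Complex (4^-1 * (pd (lshift n k) (pd (lshift n j) phi) z
              + pd (rshift n k) (pd (rshift n j) phi) z))
     (4^-1 * (pd (rshift n k) (pd (lshift n j) phi) z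
                  - pd (lshift n k) (pd (rshift n j) phi) z))).

Definition psd_mx (R : realType) (n : nat) (H : 'M[R[i]]_n) : Prop :=
  forall w : 'cV[R[i]]_n, 0 <= \sum_(j < n) \sum_(k < n) (w j 0)^* * H j k * w k 0.

Definition plurisubharmonic (R : realType) (n : nat) (phi : Cn R n -> R) : Prop :=
  forall z, psd_mx (complex_hessian phi z).

Definition laplacian (R : realType) (m : nat) (f : 'rV[R]_m -> R) : 'rV[R]_m -> R :=
  fun z => \sum_(k < m) pd k (pd k f) z.

Definition enorm (R : realType) (m : nat) (v : 'rV[R]_m) : R :=
  Num.sqrt (\sum_(k < m) v 0 k ^+ 2).

Definition eball (R : realType) (m : nat) (z : 'rV[R]_m) (r : R) : set 'rV[R]_m :=
  [set w | enorm (w - z) < r].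

Definition supLap (R : realType) (n : nat) (phi : Cn R n -> R) (z : Cn R n) (r : R)
  : \bar R :=
  ereal_sup [set (laplacian phi w)%:E | w in eball z r].

Definition admissible (R : realType) (n : nat) (phi : Cn R n -> R) : Prop :=
  C2 phi /\ plurisubharmonic phi /\
  (exists D : R, forall z r, 0 < r ->
      (supLap phi z (2 * r) <= D%:E * supLap phi z r)%E) /\
  (exists c : R, 0 < c /\
      (0 < ereal_inf [set supLap phi z c | z in [set: Cn R n]])%E).

Definition rho (R : realType) (n : nat) (phi : Cn R n -> R) (z : Cn R n) : \bar R :=
  ereal_sup [set r%:E | r in [set r : R | 0 < r /\ (supLap phi z r <= (r ^- 2)%:E)%E]].

(** If [r > max(c, 1, 1/e)], where [e > 0] is the uniform lower bound on
    [sup_{B(z,c)} Delta phi] given by condition (b), then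
    [sup_{B(z,r)} Delta phi >= e > 1/r > r^-2], so [r] cannot be an admissible
    radius at any point [z]. *)
From HB Require Import structures.
From mathcomp Require Import all_boot all_order all_algebra.
From mathcomp Require Import all_classical all_reals all_analysis.
From mathcomp Require Import complex.
Import Order.TTheory GRing.Theory Num.Theory.
Local Open Scope classical_set_scope.
Local Open Scope ring_scope.

Lemma ereal_inf_gt0_lbound {R : realType} {S : set \bar R} :
  (0 < ereal_inf S)%E -> exists2 e : R, 0 < e & forall x, S x -> (e%:E <= x)%E.
Proof.
have lbS := @ereal_inf_lbound R S.
case: (ereal_inf S) lbS => [e | | ] // lbS.
- by rewrite lte_fin => e_gt0; exists e.
- by move=> _; exists 1 => // x /lbS; rewrite leye_eq => /eqP ->; rewrite leey.
Qed.

Lemma supLap_le_radius (R : realType) (n : nat) (phi : Cn R n -> R)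
    (z : Cn R n) (r1 r2 : R) :
  r1 <= r2 -> (supLap phi z r1 <= supLap phi z r2)%E.
Proof.
move=> r12; apply: ereal_sup_le => _ [w wz <-]; exists w => //.
exact: lt_le_trans wz r12.
Qed.

Lemma invr_sqr_lt (R : realFieldType) (e r : R) :
  0 < e -> 1 < r -> e^-1 < r -> r ^- 2 < e.
Proof.
move=> e_gt0 r_gt1 er.
have r_gt0 : 0 < r by apply: lt_trans r_gt1.
have r_lt_sqr : r < r ^+ 2 by rewrite expr2 -{1}(mulr1 r) ltr_pM2l.
by rewrite -[e]invrK ltf_pV2 ?posrE ?exprn_gt0 ?invr_gt0 // (lt_trans er).
Qed.

Lemma rho_le_of_supLap_lbound (R : realType) (n : nat) (phi : Cn R n -> R)
    (z : Cn R n) (c e : R) :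
  0 < e -> (e%:E <= supLap phi z c)%E ->
  (rho phi z <= (Num.max c (Num.max 1 e^-1))%:E)%E.
Proof.
move=> e_gt0 e_le_sup; apply: ge_ereal_sup => _ [r [r_gt0 r_adm] <-].
rewrite lee_fin leNgt; apply/negP; rewrite !gt_max => /and3P[cr r_gt1 er].
have : (e%:E <= (r ^- 2)%:E)%E.
  by rewrite (le_trans e_le_sup) // (le_trans _ r_adm) // supLap_le_radius ?ltW.
by rewrite lee_fin leNgt invr_sqr_lt.
Qed.

Theorem mainTheorem12 (R : realType) (n : nat) (phi : Cn R n -> R) :
  admissible phi ->
  exists M : R, forall z : Cn R n, (rho phi z <= M%:E)%E.
Proof.
move=> [_ [_ [_ [c [_ inf_gt0]]]]].
have [e e_gt0 e_lb] := ereal_inf_gt0_lbound inf_gt0.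
exists (Num.max c (Num.max 1 e^-1)) => z.
by apply: rho_le_of_supLap_lbound e_gt0 _; apply: e_lb; exists z.
Qed.
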